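(* Let $A\in\mathbb{R}^{m\times n}$, let $k$ be a positive integer, $\epsilon>0$, and let $C$ be the $m\times c$ matrix constructed by sampling $c$ columns of $A$ with the \textsc{SelectColumnsSinglePass} algorithm, using probabilities with $p_i\ge\beta\|A^{(i)}\|_2^2/\|A\|_F^2$ for some positive $\beta\le1$. If $\eta=1+\sqrt{(8/\beta)\log(1/\delta)}$ for any $0<\delta<1$, then, with probability at least $1-\delta$, $$\|A-CC^{+}A\|_F^2\le\|A-A_k\|_F^2+\epsilon\|A\|_F^2,$$ provided $c\ge 4\eta^2k/(\beta\epsilon^2)$.
   Context: \textsc{SelectColumnsSinglePass}: given $A\in\mathbb{R}^{m\times n}$ and an integer $1\le c\le n$, compute probabilities $\{p_i\}_{i=1}^n$ with $p_i\ge\beta\|A^{(i)}\|_2^2/\|A\|_F^2$ (for some positive $\beta\le1$); in $c$ i.i.d. trials pick $i_t\in[n]$ with $\Pr[i_t=\alpha]=p_\alpha$, forming a multiset $S$; return $C=A_S$, the $m\times|S|$ matrix of (unscaled) columns of $A$ with indices in $S$. $A^{(i)}$ is the $i$-th column of $A$, $C^{+}$ the Moore–Penrose pseudoinverse, $A_k$ the best rank-$k$ approximation of $A$. *)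

From HB Require Import structures.
From mathcomp Require Import all_boot all_order all_algebra.
From mathcomp Require Import boolp classical_sets reals exp.
Set Implicit Arguments. Unset Strict Implicit. Unset Printing Implicit Defensive.
Import Order.TTheory GRing.Theory Num.Theory.
Local Open Scope ring_scope.

Section Defs.
Variable R : realType.

Definition frob2 (m n : nat) (A : 'M[R]_(m, n)) : R :=
  \sum_(i < m) \sum_(j < n) A i j ^+ 2.

Definition colnorm2 (m n : nat) (A : 'M[R]_(m, n)) (j : 'I_n) : R :=
  \sum_(i < m) A i j ^+ 2.

Definition penrose (m c : nat) (C : 'M[R]_(m, c)) (X : 'M[R]_(c, m)) : Prop :=
  [/\ C *m X *m C = C, X *m C *m X = X,
      (C *m X)^T = C *m X & (X *m C)^T = X *m C].

(* Moore--Penrose pseudoinverse C^+ (it exists and is unique) *)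
Definition mpinv (m c : nat) (C : 'M[R]_(m, c)) : 'M[R]_(c, m) :=
  xget 0 [set X | penrose C X].

Definition best_rank_approx (m n k : nat) (A Ak : 'M[R]_(m, n)) : Prop :=
  (\rank Ak <= k)%N /\
  forall B : 'M[R]_(m, n), (\rank B <= k)%N -> frob2 (A - Ak) <= frob2 (A - B).

(* the matrix A_S of the (unscaled) sampled columns, S given as i_1..i_c *)
Definition sampled_cols (m n c : nat) (A : 'M[R]_(m, n))
  (S : {ffun 'I_c -> 'I_n}) : 'M[R]_(m, c) :=
  \matrix_(i < m, t < c) A i (S t).

(* probability of an event under c i.i.d. trials with distribution p on [n] *)
Definition iid_prob (n c : nat) (p : 'I_n -> R)
  (E : {ffun 'I_c -> 'I_n} -> bool) : R :=
  \sum_(S : {ffun 'I_c -> 'I_n} | E S) \prod_(t < c) p (S t).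

End Defs.

(* Let [P] be the orthogonal projection onto the column space of [A_k] (only
   [rank A_k <= k] matters), [Pc = C C^+], and [Q] the projection onto the range
   of [Pc P]. Then [Q] has rank at most [k], [Q <= Pc], and [P Y = P Q Y] for
   every [Y] whose columns lie in the range of [C]; hence
     ||A - C C^+ A||^2 <= ||A - A_k||^2 + tr ((P - Q) (A A^T - Y Y^T))
                       <= ||A - A_k||^2 + sqrt (2k) ||A A^T - Y Y^T||.
   Rescaling the sampled columns by [1 / sqrt (c p_i)] gives a [Y] for which
   [Y Y^T] is a sum of [c] i.i.d. rank-one matrices with mean [A A^T]. The error
   ||A A^T - Y Y^T|| has expectation at most [||A||^2 / sqrt (beta c)] and moves
   by at most [2 ||A||^2 / (beta c)] when one sample changes, so McDiarmid's
   inequality bounds the probability that it exceeds [eps ||A||^2 / sqrt (2k)]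
   by [delta]. *)

From HB Require Import structures.
From mathcomp Require Import all_boot all_order all_algebra.
From mathcomp Require Import boolp classical_sets reals exp sequences.
From mathcomp Require Import ring lra.
Set Implicit Arguments. Unset Strict Implicit. Unset Printing Implicit Defensive.
Import Order.TTheory GRing.Theory Num.Theory.
Local Open Scope ring_scope.

Section FrobeniusInnerProduct.
Variable R : realType.

Definition mxdot a b (X Y : 'M[R]_(a, b)) : R := \tr (X *m Y^T).

Definition frob a b (X : 'M[R]_(a, b)) : R := Num.sqrt (frob2 X).

Lemma frob2_dot a b (X : 'M[R]_(a, b)) : frob2 X = mxdot X X.
Proof.
apply: eq_bigr => i _; rewrite mxE.
by apply: eq_bigr => j _; rewrite mxE expr2.
Qed.

Lemma mxdotC a b (X Y : 'M[R]_(a, b)) : mxdot X Y = mxdot Y X.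
Proof. by rewrite /mxdot -mxtrace_tr trmx_mul trmxK. Qed.

Lemma mxdotDl a b (X Y Z : 'M[R]_(a, b)) : mxdot (X + Y) Z = mxdot X Z + mxdot Y Z.
Proof. by rewrite /mxdot mulmxDl mxtraceD. Qed.

Lemma mxdotZl a b x (X Z : 'M[R]_(a, b)) : mxdot (x *: X) Z = x * mxdot X Z.
Proof. by rewrite /mxdot -scalemxAl mxtraceZ. Qed.

Lemma mxdotNl a b (X Z : 'M[R]_(a, b)) : mxdot (- X) Z = - mxdot X Z.
Proof. by rewrite -scaleN1r mxdotZl mulN1r. Qed.

Lemma mxdotBl a b (X Y Z : 'M[R]_(a, b)) : mxdot (X - Y) Z = mxdot X Z - mxdot Y Z.
Proof. by rewrite mxdotDl mxdotNl. Qed.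

Lemma mxdotDr a b (X Y Z : 'M[R]_(a, b)) : mxdot Z (X + Y) = mxdot Z X + mxdot Z Y.
Proof. by rewrite mxdotC mxdotDl !(mxdotC Z). Qed.

Lemma mxdotZr a b x (X Z : 'M[R]_(a, b)) : mxdot Z (x *: X) = x * mxdot Z X.
Proof. by rewrite mxdotC mxdotZl mxdotC. Qed.

Lemma mxdotBr a b (X Y Z : 'M[R]_(a, b)) : mxdot Z (X - Y) = mxdot Z X - mxdot Z Y.
Proof. by rewrite mxdotC mxdotBl !(mxdotC Z). Qed.

Lemma mxdot0r a b (Z : 'M[R]_(a, b)) : mxdot Z 0 = 0.
Proof. by rewrite /mxdot trmx0 mulmx0 mxtrace0. Qed.

Lemma mxdot_sumr a b I (r : seq I) (P : pred I) (F : I -> 'M[R]_(a, b)) Z :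
  mxdot Z (\sum_(i <- r | P i) F i) = \sum_(i <- r | P i) mxdot Z (F i).
Proof. by elim/big_rec2: _ => [|i y M _ <-]; rewrite ?mxdot0r ?mxdotDr. Qed.

Lemma frob2Z a b x (X : 'M[R]_(a, b)) : frob2 (x *: X) = x ^+ 2 * frob2 X.
Proof. by rewrite !frob2_dot mxdotZl mxdotZr mulrA -expr2. Qed.

Lemma frob2_ge0 a b (X : 'M[R]_(a, b)) : 0 <= frob2 X.
Proof. by apply: sumr_ge0 => i _; apply: sumr_ge0 => j _; apply: sqr_ge0. Qed.

Lemma frob20 a b : frob2 (0 : 'M[R]_(a, b)) = 0.
Proof. by rewrite /frob2 big1 // => i _; rewrite big1 // => j _; rewrite mxE expr0n. Qed.

Lemma frob2_eq0 a b (X : 'M[R]_(a, b)) : (frob2 X == 0) = (X == 0).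
Proof.
apply/idP/eqP => [|->]; last by rewrite frob20.
rewrite psumr_eq0 => [/allP X0|i _]; last by apply: sumr_ge0 => j _; apply: sqr_ge0.
apply/matrixP => i j; have /implyP := X0 i (mem_index_enum _).
rewrite psumr_eq0 => [/(_ isT)/allP/(_ j (mem_index_enum _))|j' _]; last exact: sqr_ge0.
by rewrite mxE implyTb sqrf_eq0 => /eqP.
Qed.

Lemma mxdot_sqr_le a b (X Y : 'M[R]_(a, b)) : mxdot X Y ^+ 2 <= frob2 X * frob2 Y.
Proof.
have [Y0|Y0] := eqVneq (frob2 Y) 0.
  have /eqP Yz : Y == 0 by rewrite -frob2_eq0 Y0.
  by rewrite Y0 mulr0 Yz mxdot0r expr0n.
have Y_gt0 : 0 < frob2 Y by rewrite lt_def Y0 frob2_ge0.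
(* expand [0 <= |v X - e Y|^2] with [v = |Y|^2] and [e = <X, Y>] *)
have := frob2_ge0 (frob2 Y *: X - mxdot X Y *: Y).
rewrite frob2_dot !(mxdotBl, mxdotBr, mxdotZl, mxdotZr) -!frob2_dot (mxdotC Y X).
move=> h; have : 0 <= frob2 Y * (frob2 X * frob2 Y - mxdot X Y ^+ 2) by lra.
by rewrite pmulr_rge0 // subr_ge0.
Qed.

Lemma frob_ge0 a b (X : 'M[R]_(a, b)) : 0 <= frob X.
Proof. exact: sqrtr_ge0. Qed.

Lemma sqr_frob a b (X : 'M[R]_(a, b)) : frob X ^+ 2 = frob2 X.
Proof. by rewrite sqr_sqrtr // frob2_ge0. Qed.

Lemma mxdot_le_frob a b (X Y : 'M[R]_(a, b)) : mxdot X Y <= frob X * frob Y.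
Proof.
apply: le_trans (ler_norm _) _.
rewrite -(ler_pXn2r (_ : 0 < 2)%N) ?nnegrE ?mulr_ge0 ?frob_ge0 //.
by rewrite exprMn !sqr_frob real_normK ?num_real ?mxdot_sqr_le.
Qed.

Lemma ler_frobD a b (X Y : 'M[R]_(a, b)) : frob (X + Y) <= frob X + frob Y.
Proof.
rewrite -(ler_pXn2r (_ : 0 < 2)%N) ?nnegrE ?addr_ge0 ?frob_ge0 //.
rewrite sqr_frob frob2_dot mxdotDl !mxdotDr -!frob2_dot -!sqr_frob (mxdotC Y X).
have := mxdot_le_frob X Y; lra.
Qed.

Lemma frobN a b (X : 'M[R]_(a, b)) : frob (- X) = frob X.
Proof. by rewrite /frob -scaleN1r frob2Z sqrrN expr1n mul1r. Qed.

Lemma ler_frob_dist a b (X Y : 'M[R]_(a, b)) : `|frob X - frob Y| <= frob (X - Y).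
Proof.
have := ler_frobD (X - Y) Y; have := ler_frobD (Y - X) X.
rewrite !subrK -opprB frobN => hY hX.
by rewrite ler_norml; apply/andP; split; lra.
Qed.

Lemma mxtrace_mul_le_frob a (X Z : 'M[R]_a) : Z^T = Z -> \tr (X *m Z) <= frob X * frob Z.
Proof. by move=> Zsym; rewrite -[in \tr _]Zsym; apply: mxdot_le_frob. Qed.

End FrobeniusInnerProduct.

Section OrthogonalProjections.
Variable R : realType.

Definition orthoproj m (P : 'M[R]_m) := P *m P = P /\ P^T = P.

Lemma orthoproj_penrose m c (C : 'M[R]_(m, c)) X : penrose C X -> orthoproj (C *m X).
Proof. by case=> CXC _ CXsym _; split; rewrite // mulmxA CXC. Qed.

Lemma orthoproj_compl m (P : 'M[R]_m) : orthoproj P -> orthoproj (1%:M - P).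
Proof.
case=> PP Psym; split; last by rewrite linearB /= trmx1 Psym.
by rewrite mulmxBl !mulmxBr !mul1mx !mulmx1 PP subrr subr0.
Qed.

Lemma frob2_orthoprojM m b (P : 'M[R]_m) (B : 'M[R]_(m, b)) : orthoproj P ->
  frob2 (P *m B) = \tr (P *m (B *m B^T)).
Proof.
case=> PP Psym; rewrite frob2_dot /mxdot trmx_mul Psym !mulmxA.
by rewrite mxtrace_mulC !mulmxA PP -!mulmxA.
Qed.

Lemma frob2_orthoprojB m b (P : 'M[R]_m) (B : 'M[R]_(m, b)) : orthoproj P ->
  frob2 (B - P *m B) = frob2 B - \tr (P *m (B *m B^T)).
Proof.
move=> Pproj; have [PP Psym] := Pproj.
rewrite frob2_dot mxdotBl !mxdotBr -!frob2_dot frob2_orthoprojM //.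
have PBB : mxdot B (P *m B) = \tr (P *m (B *m B^T)).
  by rewrite /mxdot trmx_mul Psym [in LHS]mulmxA [in LHS]mxtrace_mulC.
by rewrite (mxdotC (P *m B)) PBB; ring.
Qed.

Lemma frob2_orthoproj_le m b (P : 'M[R]_m) (B : 'M[R]_(m, b)) : orthoproj P ->
  frob2 (P *m B) <= frob2 B.
Proof.
move=> Pproj; have := frob2_ge0 (B - P *m B).
by rewrite frob2_orthoprojB // frob2_orthoprojM // subr_ge0.
Qed.

Lemma mxtrace_orthoproj_le m b (P Q : 'M[R]_m) (B : 'M[R]_(m, b)) :
  orthoproj P -> orthoproj Q -> P *m Q = Q ->
  \tr (Q *m (B *m B^T)) <= \tr (P *m (B *m B^T)).
Proof.
move=> [PP Psym] [QQ Qsym] PQ.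
have QP : Q *m P = Q by rewrite -Qsym -Psym -trmx_mul PQ.
have PQproj : orthoproj (P - Q).
  split; last by rewrite linearB /= Psym Qsym.
  by rewrite mulmxBl !mulmxBr PP PQ QP QQ subrr subr0.
have -> : \tr (P *m (B *m B^T)) = \tr (Q *m (B *m B^T)) + frob2 ((P - Q) *m B).
  by rewrite frob2_orthoprojM // mulmxBl raddfB addrC subrK.
by rewrite lerDl frob2_ge0.
Qed.

Lemma frob2_orthoprojB_le m (P Q : 'M[R]_m) :
  orthoproj P -> orthoproj Q -> frob2 (P - Q) <= \tr P + \tr Q.
Proof.
move=> Pproj Qproj; have [PP Psym] := Pproj; have [QQ Qsym] := Qproj.
have trPQ : 0 <= \tr (P *m Q).
  by have := frob2_ge0 (P *m Q); rewrite frob2_orthoprojM // Qsym QQ.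
rewrite frob2_dot /mxdot linearB /= Psym Qsym mulmxBl !mulmxBr PP QQ.
rewrite !raddfB /= (mxtrace_mulC Q P); lra.
Qed.

End OrthogonalProjections.

Section PseudoInverse.
Variable R : realType.

Lemma gram_unitmx m r (F : 'M[R]_(m, r)) : row_free F^T -> F^T *m F \in unitmx.
Proof.
move=> Ffree; rewrite -row_free_unit -kermx_eq0; apply/eqP/row_matrixP => i.
set v := row i _.
have vFF : v *m (F^T *m F) = 0 by rewrite /v -row_mul mulmx_ker row0.
have : v *m F^T = 0.
  apply/eqP; rewrite -frob2_eq0 frob2_dot /mxdot trmx_mul trmxK mulmxA.
  by rewrite -(mulmxA v) vFF mul0mx mxtrace0.
by move/eqP; rewrite mulmx_free_eq0 // => /eqP ->; rewrite row0.
Qed.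

Lemma penrose_full_rank_factor m r c (F : 'M[R]_(m, r)) (G : 'M[R]_(r, c)) :
  F^T *m F \in unitmx -> G *m G^T \in unitmx ->
  exists2 X, penrose (F *m G) X & \tr (F *m G *m X) = r%:R.
Proof.
move=> uF uG.
set X := G^T *m invmx (G *m G^T) *m invmx (F^T *m F) *m F^T.
have CX : F *m G *m X = F *m invmx (F^T *m F) *m F^T.
  by rewrite /X !mulmxA -(mulmxA F G) -(mulmxA F (G *m G^T)) mulmxV // mulmx1.
have XC : X *m (F *m G) = G^T *m invmx (G *m G^T) *m G.
  by rewrite /X !mulmxA -(mulmxA _ F^T F) -(mulmxA _ (invmx (F^T *m F))) mulVmx // mulmx1.
exists X; last by rewrite CX mxtrace_mulC mulmxA mulmxV // mxtrace1.
split.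
- by rewrite CX -!mulmxA (mulmxA F^T) (mulmxA (invmx _)) mulVmx // mul1mx.
- rewrite -mulmxA CX /X -!mulmxA; congr (_ *m _); congr (_ *m _).
  by rewrite (mulmxA F^T F) (mulmxA (F^T *m F)) mulmxV // mul1mx.
- by rewrite CX !trmx_mul trmxK -mulmxA trmx_inv trmx_mul trmxK mulmxA.
- by rewrite XC !trmx_mul trmxK -mulmxA trmx_inv trmx_mul trmxK mulmxA.
Qed.

Lemma penrose_exists m c (C : 'M[R]_(m, c)) :
  exists2 X, penrose C X & \tr (C *m X) = (\rank C)%:R.
Proof.
have uF : (col_base C)^T *m col_base C \in unitmx.
  by apply: gram_unitmx; rewrite /row_free mxrank_tr; apply: col_base_full.
have uG : row_base C *m (row_base C)^T \in unitmx.
  by have := @gram_unitmx _ _ (row_base C)^T; rewrite trmxK; apply; apply: row_base_free.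
by have := penrose_full_rank_factor uF uG; rewrite mulmx_base.
Qed.

Lemma penrose_mul_uniq m c (C : 'M[R]_(m, c)) X Y :
  penrose C X -> penrose C Y -> C *m X = C *m Y.
Proof.
case=> CXC _ CXsym _ [CYC _ CYsym _].
have -> : C *m X = C *m Y *m (C *m X) by rewrite mulmxA CYC.
by rewrite -{1}CYsym -CXsym -trmx_mul mulmxA CXC CYsym.
Qed.

Lemma mpinvP m c (C : 'M[R]_(m, c)) : penrose C (mpinv C).
Proof.
apply: (@xgetPex _ 0 [set X | penrose C X]).
by have [X CX _] := penrose_exists C; exists X.
Qed.

Lemma orthoproj_mpinv m c (C : 'M[R]_(m, c)) : orthoproj (C *m mpinv C).
Proof. exact/orthoproj_penrose/mpinvP. Qed.

Lemma mulmx_mpinvK m c (C : 'M[R]_(m, c)) : C *m mpinv C *m C = C.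
Proof. by case: (mpinvP C). Qed.

Lemma mxtrace_mpinv m c (C : 'M[R]_(m, c)) : \tr (C *m mpinv C) = (\rank C)%:R.
Proof.
have [X CX trCX] := penrose_exists C.
by rewrite (penrose_mul_uniq (mpinvP C) CX).
Qed.

End PseudoInverse.

Section ProjectionErrorBound.
Variable R : realType.

Lemma frob2_sub_orthoproj_le m n (A Ak : 'M[R]_(m, n)) (P : 'M[R]_m) :
  orthoproj P -> P *m Ak = Ak ->
  frob2 A - \tr (P *m (A *m A^T)) <= frob2 (A - Ak).
Proof.
move=> Pproj PAk; rewrite -frob2_orthoprojB //.
have -> : A - P *m A = (1%:M - P) *m (A - Ak).
  by rewrite mulmxBl mulmxBr !mul1mx mulmxBr PAk opprB addrA subrK.
exact/frob2_orthoproj_le/orthoproj_compl.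
Qed.

Lemma frob2_sub_mpinv_le m n c c' k (A Ak : 'M[R]_(m, n)) (C : 'M[R]_(m, c))
    (D : 'M[R]_(c, c')) :
  (\rank Ak <= k)%N ->
  frob2 (A - C *m mpinv C *m A) <=
  frob2 (A - Ak) + Num.sqrt (2 * k%:R) * frob (A *m A^T - (C *m D) *m (C *m D)^T).
Proof.
move=> rkAk.
set Pc := C *m mpinv C; set P := Ak *m mpinv Ak.
set M := Pc *m P; set Q := M *m mpinv M.
set W := A *m A^T; set Y := C *m D.
have Pc_proj : orthoproj Pc := orthoproj_mpinv C.
have P_proj : orthoproj P := orthoproj_mpinv Ak.
have Q_proj : orthoproj Q := orthoproj_mpinv M.
have PcQ : Pc *m Q = Q.
  by rewrite /Q /M (mulmxA Pc (Pc *m P)) (mulmxA Pc Pc) Pc_proj.1.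
have PcY : Pc *m Y = Y by rewrite /Y mulmxA mulmx_mpinvK.
have PQY : P *m (Q *m Y) = P *m Y.
  have PPcQ : P *m Pc *m Q = P *m Pc.
    have := congr1 trmx (mulmx_mpinvK M); rewrite -/Q [in LHS]trmx_mul Q_proj.2.
    by rewrite /M trmx_mul Pc_proj.2 P_proj.2.
  by rewrite -PcQ (mulmxA P (Pc *m Q)) (mulmxA P Pc) PPcQ -mulmxA PcY.
have trQ : \tr Q <= k%:R.
  rewrite mxtrace_mpinv ler_nat (leq_trans _ rkAk) // (leq_trans (mxrankM_maxr _ _)) //.
  exact: mxrankM_maxl.
have trP : \tr P <= k%:R by rewrite mxtrace_mpinv ler_nat.
have frobPQ : frob (P - Q) <= Num.sqrt (2 * k%:R).
  rewrite ler_sqrt ?mulr_ge0 ?ler0n //.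
  by apply: le_trans (frob2_orthoprojB_le P_proj Q_proj) _; lra.
have trPG : \tr (P *m (Y *m Y^T)) <= \tr (Q *m (Y *m Y^T)).
  by rewrite -!frob2_orthoprojM // -PQY frob2_orthoproj_le.
have trQW : \tr (Q *m W) <= \tr (Pc *m W) by apply: mxtrace_orthoproj_le.
have trPQ : \tr (P *m W) - \tr (Q *m W) <= frob (P - Q) * frob (W - Y *m Y^T).
  apply: le_trans (mxtrace_mul_le_frob _ _); last first.
    by rewrite linearB /= /W !trmx_mul !trmxK.
  by rewrite mulmxBl !mulmxBr !raddfB /=; lra.
have := frob2_sub_orthoproj_le A P_proj (mulmx_mpinvK Ak).
have := ler_wpM2r (frob_ge0 (W - Y *m Y^T)) frobPQ.
rewrite frob2_orthoprojB // -/W; lra.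
Qed.

End ProjectionErrorBound.

Section FfunCons.
Variable n : nat.

Definition fcons c (i : 'I_n) (S : {ffun 'I_c -> 'I_n}) : {ffun 'I_c.+1 -> 'I_n} :=
  [ffun t => if unlift ord0 t is Some t' then S t' else i].

Definition ftail c (S : {ffun 'I_c.+1 -> 'I_n}) : {ffun 'I_c -> 'I_n} :=
  [ffun t => S (lift ord0 t)].

Definition fupd c (S : {ffun 'I_c -> 'I_n}) (t : 'I_c) (i : 'I_n) : {ffun 'I_c -> 'I_n} :=
  [ffun u => if u == t then i else S u].

Lemma fcons0 c i (S : {ffun 'I_c -> 'I_n}) : fcons i S ord0 = i.
Proof. by rewrite ffunE unlift_none. Qed.

Lemma fconsS c i (S : {ffun 'I_c -> 'I_n}) t : fcons i S (lift ord0 t) = S t.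
Proof. by rewrite ffunE liftK. Qed.

Lemma fconsK c (S : {ffun 'I_c.+1 -> 'I_n}) : fcons (S ord0) (ftail S) = S.
Proof.
apply/ffunP => t; case: (unliftP ord0 t) => [t' ->|->]; last by rewrite fcons0.
by rewrite fconsS ffunE.
Qed.

Lemma ftail_fcons c i (S : {ffun 'I_c -> 'I_n}) : ftail (fcons i S) = S.
Proof. by apply/ffunP => t; rewrite ffunE fconsS. Qed.

Lemma fcons_fupd c i (S : {ffun 'I_c -> 'I_n}) t j :
  fcons i (fupd S t j) = fupd (fcons i S) (lift ord0 t) j.
Proof.
apply/ffunP => u; case: (unliftP ord0 u) => [u' ->|->].
  by rewrite fconsS !ffunE liftK (inj_eq (@lift_inj _ ord0)).
by rewrite fcons0 ffunE fcons0 (negbTE (neq_lift _ _)).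
Qed.

Lemma fupd0_fcons c i j (S : {ffun 'I_c -> 'I_n}) :
  fupd (fcons i S) ord0 j = fcons j S.
Proof.
apply/ffunP => u; case: (unliftP ord0 u) => [u' ->|->].
  by rewrite ffunE !fconsS eq_sym (negbTE (neq_lift _ _)).
by rewrite ffunE eqxx fcons0.
Qed.

Lemma big_ffunS (V : nmodType) c (F : {ffun 'I_c.+1 -> 'I_n} -> V) :
  \sum_S F S = \sum_(i < n) \sum_(S : {ffun 'I_c -> 'I_n}) F (fcons i S).
Proof.
rewrite pair_big /= (reindex (fun x : 'I_n * {ffun 'I_c -> 'I_n} => fcons x.1 x.2)) //=.
exists (fun S : {ffun 'I_c.+1 -> 'I_n} => (S ord0, ftail S)) => [[i S] _|S _] /=; last exact: fconsK.
by rewrite fcons0 ftail_fcons.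
Qed.

End FfunCons.

Section IidExpectation.
Variables (R : realType) (n : nat) (p : 'I_n -> R).

Definition iid_expect c (h : {ffun 'I_c -> 'I_n} -> R) : R :=
  \sum_(S : {ffun 'I_c -> 'I_n}) (\prod_(t < c) p (S t)) * h S.
Arguments iid_expect : clear implicits.

Lemma iid_expect0 h (S : {ffun 'I_0 -> 'I_n}) : iid_expect 0 h = h S.
Proof.
have S0 (S' : {ffun 'I_0 -> 'I_n}) : S' = S by apply/ffunP => [[]].
rewrite /iid_expect (big_pred1 S) ?big_ord0 ?mul1r // => S'.
by rewrite /= (S0 S') eqxx.
Qed.

Lemma iid_expectS c h :
  iid_expect c.+1 h = \sum_(i < n) p i * iid_expect c (fun S => h (fcons i S)).
Proof.
rewrite /iid_expect big_ffunS; apply: eq_bigr => i _; rewrite mulr_sumr.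
apply: eq_bigr => S _; rewrite big_ord_recl fcons0 -!mulrA; congr (_ * (_ * _)).
by apply: eq_bigr => t _; rewrite fconsS.
Qed.

Lemma eq_iid_expect c h1 h2 : h1 =1 h2 -> iid_expect c h1 = iid_expect c h2.
Proof. by move=> h12; apply: eq_bigr => S _; rewrite h12. Qed.

Lemma iid_expectD c h1 h2 :
  iid_expect c (fun S => h1 S + h2 S) = iid_expect c h1 + iid_expect c h2.
Proof. by rewrite -big_split; apply: eq_bigr => S _; rewrite mulrDr. Qed.

Lemma iid_expectZ c a h : iid_expect c (fun S => a * h S) = a * iid_expect c h.
Proof. by rewrite mulr_sumr; apply: eq_bigr => S _; rewrite mulrCA. Qed.

Lemma iid_expectB c h1 h2 :
  iid_expect c (fun S => h1 S - h2 S) = iid_expect c h1 - iid_expect c h2.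
Proof.
rewrite -mulN1r -iid_expectZ -iid_expectD.
by apply: eq_iid_expect => S; rewrite mulN1r.
Qed.

Lemma iid_probE c (E : {ffun 'I_c -> 'I_n} -> bool) :
  iid_prob p E = iid_expect c (fun S => (E S)%:R).
Proof.
rewrite /iid_prob /iid_expect big_mkcond /=; apply: eq_bigr => S _.
by case: (E S); rewrite ?mulr1 ?mulr0.
Qed.

Hypothesis p_ge0 : forall i, 0 <= p i.
Hypothesis p_sum1 : \sum_(i < n) p i = 1.

Lemma norm_wmean_le (g : 'I_n -> R) (d : R) :
  (forall i, `|g i| <= d) -> `|\sum_(i < n) p i * g i| <= d.
Proof.
move=> gd; apply: le_trans (ler_norm_sum _ _ _) _.
rewrite -[d]mul1r -p_sum1 mulr_suml; apply: ler_sum => i _.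
by rewrite normrM ger0_norm // ler_wpM2l.
Qed.

Lemma iid_expect_cst c x : iid_expect c (fun _ => x) = x.
Proof.
rewrite /iid_expect -big_distrl /= -(bigA_distr_bigA (fun _ (j : 'I_n) => p j)) /=.
by rewrite big1 ?mul1r // => t _; rewrite p_sum1.
Qed.

Lemma ler_iid_expect c h1 h2 : (forall S, h1 S <= h2 S) ->
  iid_expect c h1 <= iid_expect c h2.
Proof. by move=> h12; apply: ler_sum => S _; rewrite ler_wpM2l ?prodr_ge0. Qed.

Lemma iid_expect_ge0 c h : (forall S, 0 <= h S) -> 0 <= iid_expect c h.
Proof. by move=> h0; rewrite -(iid_expect_cst c 0); apply: ler_iid_expect. Qed.

Lemma ler_norm_iid_expect c h :
  `|iid_expect c h| <= iid_expect c (fun S => `|h S|).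
Proof.
apply: le_trans (ler_norm_sum _ _ _) _; apply: ler_sum => S _.
by rewrite normrM ger0_norm ?prodr_ge0.
Qed.

Lemma iid_expect_sqr_le c h :
  iid_expect c h ^+ 2 <= iid_expect c (fun S => h S ^+ 2).
Proof.
set e := iid_expect c h.
have : 0 <= iid_expect c (fun S => (h S - e) ^+ 2).
  by apply: iid_expect_ge0 => S; apply: sqr_ge0.
rewrite (@eq_iid_expect c _ (fun S => h S ^+ 2 + (-2 * e * h S + e ^+ 2))); last first.
  by move=> S /=; ring.
rewrite iid_expectD (iid_expectD (fun S => -2 * e * h S)) iid_expectZ iid_expect_cst.
rewrite -/e; lra.
Qed.

Lemma iid_probT c : iid_prob p (fun _ : {ffun 'I_c -> 'I_n} => true) = 1.
Proof. by rewrite iid_probE iid_expect_cst. Qed.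

Lemma iid_probC c (E : {ffun 'I_c -> 'I_n} -> bool) :
  iid_prob p (fun S => ~~ E S) = 1 - iid_prob p E.
Proof.
rewrite !iid_probE.
transitivity (iid_expect c (fun S => 1 - (E S)%:R)); last by rewrite iid_expectB iid_expect_cst.
by apply: eq_iid_expect => S; case: (E S); rewrite /= ?subr0 ?subrr.
Qed.

Lemma iid_prob_le c (E1 E2 : {ffun 'I_c -> 'I_n} -> bool) :
  (forall S, E1 S -> E2 S) -> iid_prob p E1 <= iid_prob p E2.
Proof.
move=> E12; rewrite !iid_probE; apply: ler_iid_expect => S.
by case: (boolP (E1 S)) => [/E12 ->|_] //; case: (E2 S).
Qed.

End IidExpectation.
Arguments iid_expect {R n} p c h.

Section HoeffdingLemma.
Variable R : realType.

(* From [expR (- x / 4) >= 1 - x / 4] and [(1 + x + x^2) (1 - x/4)^4 >= 1]. *)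
Lemma expR_le_quad_ge0 (x : R) : 0 <= x <= 1 / 2 -> expR x <= 1 + x + x ^+ 2.
Proof.
move=> /andP[x0 x_le].
set e := expR (x / 4); set y := 1 - x / 4.
have e_gt0 : 0 < e by apply: expR_gt0.
have ex : expR x = e ^+ 4 by rewrite -expRM_natr; congr expR; field.
have ye : y * e <= 1.
  have : y <= e^-1 by rewrite -expRN; apply: expR_ge1Dx.
  by rewrite -(ler_pM2r e_gt0) mulVf ?gt_eqF.
have ye4 : (y * e) ^+ 4 <= 1.
  by apply: exprn_ile1 => //; rewrite mulr_ge0 ?ltW // /y; lra.
have poly : 1 <= (1 + x + x ^+ 2) * y ^+ 4.
  have -> : (1 + x + x ^+ 2) * y ^+ 4 =
      1 + x ^+ 2 * (3/8 - 11/16 * x - 15/256 * x ^+ 3) + 81/256 * x ^+ 4 + 1/256 * x ^+ 6.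
    by rewrite /y; field.
  have x2 : x ^+ 2 <= 1 / 4 by nra.
  have x3 : x ^+ 3 <= 1 / 8 by rewrite exprS; nra.
  have : 0 <= x ^+ 2 * (3/8 - 11/16 * x - 15/256 * x ^+ 3) by rewrite mulr_ge0 ?sqr_ge0 //; lra.
  have := exprn_ge0 4 x0; have := exprn_ge0 6 x0; lra.
rewrite ex; have := ler_wpM2l (exprn_ge0 4 (ltW e_gt0)) poly.
rewrite mulr1 mulrCA -exprMn mulrC; move/le_trans; apply.
by rewrite -[leRHS]mul1r; apply: ler_wpM2r; [nra | rewrite mulrC].
Qed.

(* From [expR (- x) >= (1 - x / 2)^2] and [(1 + x + x^2) (1 - x/2)^2 >= 1]. *)
Lemma expR_le_quad_le0 (x : R) : x <= 0 -> expR x <= 1 + x + x ^+ 2.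
Proof.
move=> x0; have q_gt0 : 0 < 1 + x + x ^+ 2 by nra.
have sq : (1 - x / 2) ^+ 2 <= expR (- x).
  have -> : expR (- x) = expR (- x / 2) ^+ 2 by rewrite -expRM_natr; congr expR; field.
  by rewrite lerXn2r ?nnegrE ?expR_ge0 ?(le_trans _ (expR_ge1Dx _)) //; lra.
rewrite -[expR x]invrK -expRN -div1r ler_pdivrMr ?expR_gt0 //.
have := ler_wpM2l (ltW q_gt0) sq; nra.
Qed.

Lemma expR_le_quad (x : R) : x <= 1 / 2 -> expR x <= 1 + x + x ^+ 2.
Proof.
move=> x_le; have [x0|x0] := leP 0 x; last exact/expR_le_quad_le0/ltW.
by apply: expR_le_quad_ge0; rewrite x0.
Qed.

Variables (n : nat) (p : 'I_n -> R).
Hypothesis p_ge0 : forall i, 0 <= p i.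
Hypothesis p_sum1 : \sum_(i < n) p i = 1.

Lemma hoeffding_mgf_le (g : 'I_n -> R) (d s : R) :
  \sum_(i < n) p i * g i = 0 -> (forall i, `|g i| <= d) ->
  0 <= s -> s * d <= 1 / 2 ->
  \sum_(i < n) p i * expR (s * g i) <= expR (s ^+ 2 * d ^+ 2).
Proof.
move=> g_mean0 gd s0 sd.
apply: le_trans (_ : \sum_(i < n) p i * (1 + s * g i + (s * g i) ^+ 2) <= _).
  apply: ler_sum => i _; rewrite ler_wpM2l // expR_le_quad //.
  by apply: le_trans sd; rewrite (le_trans (ler_norm _)) // normrM ger0_norm ?ler_wpM2l.
have sqr_le i : p i * (s * g i) ^+ 2 <= p i * (s ^+ 2 * d ^+ 2).
  rewrite ler_wpM2l // exprMn ler_wpM2l ?sqr_ge0 //.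
  by rewrite -real_normK ?num_real // lerXn2r ?nnegrE // (le_trans _ (gd i)).
apply: le_trans (expR_ge1Dx _).
under eq_bigr do rewrite mulrDr mulrDr mulr1 mulrCA.
rewrite !big_split /= -mulr_sumr g_mean0 p_sum1 mulr0 addr0 lerD2l.
by rewrite -[leRHS]mul1r -p_sum1 mulr_suml ler_sum.
Qed.

End HoeffdingLemma.

Section BoundedDifferences.
Variables (R : realType) (n : nat) (p : 'I_n -> R).
Hypothesis p_ge0 : forall i, 0 <= p i.
Hypothesis p_sum1 : \sum_(i < n) p i = 1.

Definition bounded_diff c (d : R) (f : {ffun 'I_c -> 'I_n} -> R) :=
  forall S t i, `|f S - f (fupd S t i)| <= d.

Lemma bounded_diff_fcons c d f i :
  bounded_diff d f -> bounded_diff d (fun S : {ffun 'I_c -> 'I_n} => f (fcons i S)).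
Proof. by move=> fd S t j; rewrite fcons_fupd fd. Qed.

Lemma cond_expect_dev_le c d (f : {ffun 'I_c.+1 -> 'I_n} -> R) i :
  bounded_diff d f ->
  `|iid_expect p c (fun S => f (fcons i S)) - iid_expect p c.+1 f| <= d.
Proof.
move=> fd; pose g j := iid_expect p c (fun S => f (fcons j S)).
have -> : g i - iid_expect p c.+1 f = \sum_(j < n) p j * (g i - g j).
  under eq_bigr do rewrite mulrBr.
  by rewrite sumrB -mulr_suml p_sum1 mul1r -iid_expectS.
apply: norm_wmean_le => // j; rewrite -iid_expectB.
apply: le_trans (ler_norm_iid_expect p_ge0 _) _.
rewrite -[leRHS](iid_expect_cst p_sum1 c d); apply: ler_iid_expect => // S.
by rewrite -(fupd0_fcons i j S) fd.
Qed.

Lemma iid_expect_dev_le c d f S : bounded_diff d f ->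
  `|f S - iid_expect p c f| <= c%:R * d.
Proof.
elim: c f S => [|c IH] f S fd; first by rewrite (iid_expect0 p f S) subrr normr0 mul0r.
rewrite -(fconsK S) (le_trans (ler_distD (iid_expect p c (fun S' => f (fcons (S ord0) S'))) _ _)) //.
rewrite -nat1r mulrDl mul1r addrC lerD ?cond_expect_dev_le //.
by apply: (IH (fun S' => f (fcons (S ord0) S'))); apply: bounded_diff_fcons.
Qed.

Lemma iid_expect_mgf_le c d s f : bounded_diff d f -> 0 <= s -> s * d <= 1 / 2 ->
  iid_expect p c (fun S => expR (s * (f S - iid_expect p c f))) <=
  expR (c%:R * (s ^+ 2 * d ^+ 2)).
Proof.
move=> + s0 sd; elim: c f => [|c IH] f fd.
  rewrite mul0r expR0 -[leRHS](iid_expect_cst p_sum1 0 1); apply: ler_iid_expect => // S.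
  by rewrite (iid_expect0 p f S) subrr mulr0 expR0.
pose g i := iid_expect p c (fun S => f (fcons i S)).
set Ef := iid_expect p c.+1 f; set K := expR (c%:R * (s ^+ 2 * d ^+ 2)).
have g_mean : \sum_(i < n) p i * (g i - Ef) = 0.
  under eq_bigr do rewrite mulrBr.
  by rewrite sumrB -mulr_suml p_sum1 mul1r -iid_expectS subrr.
have step i : iid_expect p c (fun S => expR (s * (f (fcons i S) - Ef))) <=
    expR (s * (g i - Ef)) * K.
  have -> : iid_expect p c (fun S => expR (s * (f (fcons i S) - Ef))) =
      expR (s * (g i - Ef)) * iid_expect p c (fun S => expR (s * (f (fcons i S) - g i))).
    by rewrite -iid_expectZ; apply: eq_iid_expect => S; rewrite -expRD; congr expR; ring.
  by rewrite ler_wpM2l ?expR_ge0 // IH //; apply: bounded_diff_fcons.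
rewrite iid_expectS; apply: le_trans (_ : \sum_(i < n) p i * (expR (s * (g i - Ef)) * K) <= _).
  by apply: ler_sum => i _; rewrite ler_wpM2l.
under eq_bigr do rewrite mulrA.
rewrite -mulr_suml -nat1r mulrDl mul1r expRD -/K ler_wpM2r ?expR_ge0 //.
by apply: hoeffding_mgf_le => // i; apply: cond_expect_dev_le.
Qed.

(* Chernoff bound with [s = g / (2 c d^2)]; when [g > c d] the event is empty. *)
Lemma mcdiarmid_tail c d g tau f : (0 < c)%N -> 0 < d -> 0 <= g ->
  bounded_diff d f -> iid_expect p c f + g <= tau ->
  iid_prob p (fun S => tau < f S) <= expR (- (g ^+ 2 / (4 * c%:R * d ^+ 2))).
Proof.
move=> c_gt0 d_gt0 g0 fd tau_ge; set Ef := iid_expect p c f in tau_ge.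
have cR_gt0 : 0 < c%:R :> R by rewrite ltr0n.
have [cd_lt|g_le] := ltrP (c%:R * d) g.
  rewrite (le_trans _ (expR_ge0 _)) // /iid_prob big_pred0 // => S.
  have := iid_expect_dev_le S fd; rewrite -/Ef ler_norml => /andP[_ dev].
  by apply/negbTE; rewrite -leNgt; lra.
set s := g / (2 * c%:R * d ^+ 2).
have s0 : 0 <= s by rewrite divr_ge0 // mulr_ge0 ?sqr_ge0 //; lra.
have sd : s * d <= 1 / 2.
  have -> : s * d = g / (c%:R * d) / 2 by rewrite /s; field; rewrite !gt_eqF.
  by rewrite ler_pM2r ?invr_gt0 // ler_pdivrMr ?mulr_gt0 // mul1r.
rewrite iid_probE.
apply: (@le_trans _ _ (iid_expect p c (fun S => expR (- (s * g)) * expR (s * (f S - Ef))))).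
  apply: ler_iid_expect => // S; case: ltrP => [f_gt|_]; last by rewrite mulr_ge0 ?expR_ge0.
  rewrite -expRD (le_trans _ (expR_ge1Dx _)) // lerDl.
  have : 0 <= s * (f S - Ef - g) by rewrite mulr_ge0 //; lra.
  lra.
rewrite iid_expectZ (le_trans (ler_wpM2l (expR_ge0 _) (iid_expect_mgf_le fd s0 sd))) //.
rewrite -expRD ler_expR le_eqVlt; apply/orP; left; apply/eqP.
by rewrite /s; field; rewrite !gt_eqF.
Qed.

End BoundedDifferences.

Section SumOfIidMatrices.
Variables (R : realType) (n : nat) (p : 'I_n -> R).
Hypothesis p_sum1 : \sum_(i < n) p i = 1.

Lemma sum_frob2_centered_le a b (X : 'I_n -> 'M[R]_(a, b)) :
  \sum_(i < n) p i * frob2 (\sum_(j < n) p j *: X j - X i) <=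
  \sum_(i < n) p i * frob2 (X i).
Proof.
set M := \sum_(j < n) p j *: X j.
have sum_dot : \sum_(i < n) p i * mxdot M (X i) = frob2 M.
  by rewrite frob2_dot mxdot_sumr; apply: eq_bigr => i _; rewrite mxdotZr.
have expand i : p i * frob2 (M - X i) =
    p i * frob2 M - 2 * (p i * mxdot M (X i)) + p i * frob2 (X i).
  by rewrite !frob2_dot mxdotBl !mxdotBr (mxdotC (X i) M); ring.
under eq_bigr do rewrite expand.
rewrite big_split sumrB /= -mulr_suml p_sum1 mul1r -mulr_sumr sum_dot.
by have := frob2_ge0 M; lra.
Qed.

Variables (a b : nat) (X : 'I_n -> 'M[R]_(a, b)).
Hypothesis X_mean0 : \sum_(i < n) p i *: X i = 0.

Lemma sum_fcons c i (S : {ffun 'I_c -> 'I_n}) :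
  \sum_(t < c.+1) X (fcons i S t) = X i + \sum_(t < c) X (S t).
Proof. by rewrite big_ord_recl fcons0; under eq_bigr do rewrite fconsS. Qed.

Lemma iid_expect_mxdot_sum c B :
  iid_expect p c (fun S => mxdot B (\sum_(t < c) X (S t))) = 0.
Proof.
elim: c => [|c IH].
  rewrite -[RHS](iid_expect_cst p_sum1 0 0).
  by apply: eq_iid_expect => S; rewrite big_ord0 mxdot0r.
rewrite iid_expectS (eq_bigr (fun i => mxdot B (p i *: X i))) => [|i _].
  by rewrite -mxdot_sumr X_mean0 mxdot0r.
rewrite mxdotZr; congr (_ * _).
under eq_iid_expect do rewrite /= sum_fcons mxdotDr.
by rewrite iid_expectD IH addr0 iid_expect_cst.
Qed.

Lemma iid_expect_frob2_sum c :
  iid_expect p c (fun S => frob2 (\sum_(t < c) X (S t))) =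
  c%:R * \sum_(i < n) p i * frob2 (X i).
Proof.
elim: c => [|c IH].
  rewrite mul0r -[RHS](iid_expect_cst p_sum1 0 0).
  by apply: eq_iid_expect => S; rewrite big_ord0; apply/eqP; rewrite frob2_eq0.
rewrite iid_expectS (eq_bigr (fun i => p i * (frob2 (X i) +
    c%:R * \sum_(j < n) p j * frob2 (X j)))) => [|i _].
  under eq_bigr do rewrite mulrDr.
  by rewrite big_split /= -mulr_suml p_sum1 mul1r -nat1r mulrDl mul1r.
congr (_ * _).
set Z := fun S : {ffun 'I_c -> 'I_n} => \sum_(t < c) X (S t).
rewrite (@eq_iid_expect _ _ p _ _ (fun S => frob2 (X i) + (2 * mxdot (X i) (Z S) + frob2 (Z S)))).
  rewrite iid_expectD iid_expect_cst // iid_expectD iid_expectZ iid_expect_mxdot_sum.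
  by rewrite mulr0 add0r IH.
by move=> S; rewrite sum_fcons frob2_dot mxdotDl !mxdotDr -!frob2_dot (mxdotC _ (X i)); ring.
Qed.

End SumOfIidMatrices.

Section Columns.
Variable R : realType.

Lemma colnorm2_ge0 m n (A : 'M[R]_(m, n)) i : 0 <= colnorm2 A i.
Proof. by apply: sumr_ge0 => a _; apply: sqr_ge0. Qed.

Lemma frob2_col m n (A : 'M[R]_(m, n)) i : frob2 (col i A) = colnorm2 A i.
Proof. by apply: eq_bigr => a _; rewrite big_ord1 mxE. Qed.

Lemma frob2_col_outer m n (A : 'M[R]_(m, n)) i :
  frob2 (col i A *m (col i A)^T) = colnorm2 A i ^+ 2.
Proof.
rewrite /frob2 /colnorm2 expr2 mulr_suml; apply: eq_bigr => a _.
rewrite mulr_sumr; apply: eq_bigr => b _.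
by rewrite mxE big_ord1 !mxE exprMn.
Qed.

Lemma sum_colnorm2 m n (A : 'M[R]_(m, n)) : \sum_i colnorm2 A i = frob2 A.
Proof. exact: exchange_big. Qed.

Lemma mulmx_trmx_sum_col m n (A : 'M[R]_(m, n)) :
  A *m A^T = \sum_i col i A *m (col i A)^T.
Proof.
apply/matrixP => a b; rewrite mxE summxE; apply: eq_bigr => i _.
by rewrite !mxE big_ord1 !mxE.
Qed.

End Columns.

Section ColumnSampling.
Variables (R : realType) (m n c : nat) (A : 'M[R]_(m, n)) (p : 'I_n -> R) (beta : R).
Hypothesis p_ge0 : forall i, 0 <= p i.

Definition sample_scaling (S : {ffun 'I_c -> 'I_n}) : 'M[R]_c :=
  diag_mx (\row_t Num.sqrt ((c%:R * p (S t))^-1)).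

(* For [p i = 0] the inverse is the junk value [0]; the column [i] of [A] then
   vanishes anyway (see [col_eq0]). *)
Definition sample_term i : 'M[R]_m := (c%:R * p i)^-1 *: (col i A *m (col i A)^T).

Definition sample_err (S : {ffun 'I_c -> 'I_n}) : R :=
  frob (A *m A^T - \sum_(t < c) sample_term (S t)).

Lemma sample_gram (S : {ffun 'I_c -> 'I_n}) :
  sampled_cols A S *m sample_scaling S *m (sampled_cols A S *m sample_scaling S)^T =
  \sum_(t < c) sample_term (S t).
Proof.
rewrite mul_mx_diag; apply/matrixP => a b; rewrite summxE !mxE.
apply: eq_bigr => t _; rewrite /sample_term !mxE big_ord1 !mxE.
have w_ge0 : 0 <= (c%:R * p (S t))^-1 by rewrite invr_ge0 mulr_ge0 ?ler0n ?p_ge0.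
by rewrite mulrACA -expr2 sqr_sqrtr // mulrC.
Qed.

Lemma frob2_sub_mpinv_sampled_le k (Ak : 'M[R]_(m, n)) (S : {ffun 'I_c -> 'I_n}) :
  (\rank Ak <= k)%N ->
  frob2 (A - sampled_cols A S *m mpinv (sampled_cols A S) *m A) <=
  frob2 (A - Ak) + Num.sqrt (2 * k%:R) * sample_err S.
Proof. by move=> rkAk; rewrite /sample_err -sample_gram frob2_sub_mpinv_le. Qed.

Hypothesis p_sum1 : \sum_(i < n) p i = 1.
Hypothesis c_gt0 : (0 < c)%N.
Hypothesis beta_gt0 : 0 < beta.
Hypothesis A_gt0 : 0 < frob2 A.
Hypothesis p_ge : forall i, beta * colnorm2 A i / frob2 A <= p i.

Let cR_gt0 : 0 < c%:R :> R. Proof. by rewrite ltr0n. Qed.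

Lemma colnorm2_le i : colnorm2 A i <= p i * frob2 A / beta.
Proof. by rewrite ler_pdivlMr // mulrC -ler_pdivrMr. Qed.

Lemma col_eq0 i : p i = 0 -> col i A = 0.
Proof.
move=> p0; apply/eqP; rewrite -frob2_eq0 frob2_col eq_le colnorm2_ge0 andbT.
by have := colnorm2_le i; rewrite p0 !mul0r.
Qed.

Lemma frob_sample_term_le i : frob (sample_term i) <= frob2 A / (beta * c%:R).
Proof.
have w_ge0 : 0 <= (c%:R * p i)^-1 by rewrite invr_ge0 mulr_ge0 ?ler0n ?p_ge0.
rewrite /frob /sample_term frob2Z frob2_col_outer -exprMn sqrtr_sqr.
rewrite ger0_norm ?mulr_ge0 ?colnorm2_ge0 //.
have [p0|p_neq0] := eqVneq (p i) 0.
  by rewrite p0 mulr0 invr0 mul0r divr_ge0 ?mulr_ge0 ?ltW.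
apply: (le_trans (ler_wpM2l w_ge0 (colnorm2_le i))).
rewrite le_eqVlt; apply/orP; left; apply/eqP; field.
by rewrite p_neq0 !gt_eqF.
Qed.

Lemma sum_sample_term_fupd (S : {ffun 'I_c -> 'I_n}) t i :
  \sum_(u < c) sample_term (fupd S t i u) =
  \sum_(u < c) sample_term (S u) - sample_term (S t) + sample_term i.
Proof.
rewrite (bigD1 t) //= [in RHS](bigD1 t) //= ffunE eqxx [sample_term (S t) + _]addrC.
rewrite addrK addrC.
by congr (_ + _); apply: eq_bigr => u ut; rewrite ffunE (negbTE ut).
Qed.

Lemma bounded_diff_sample_err :
  bounded_diff (2 * (frob2 A / (beta * c%:R))) sample_err.
Proof.
move=> S t i; apply: le_trans (ler_frob_dist _ _) _; rewrite sum_sample_term_fupd.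
set W := A *m A^T; set T := \sum_(u < c) sample_term (S u).
have -> : W - T - (W - (T - sample_term (S t) + sample_term i)) =
    sample_term i - sample_term (S t) by apply/matrixP => a b; rewrite !mxE; ring.
have := ler_frobD (sample_term i) (- sample_term (S t)); rewrite frobN.
have := frob_sample_term_le i; have := frob_sample_term_le (S t); lra.
Qed.

Lemma sample_term_wmean : \sum_(i < n) p i *: sample_term i = c%:R^-1 *: (A *m A^T).
Proof.
rewrite mulmx_trmx_sum_col scaler_sumr; apply: eq_bigr => i _.
have [p0|p_neq0] := eqVneq (p i) 0; first by rewrite /sample_term col_eq0 // !mul0mx !scaler0.
by rewrite /sample_term scalerA invfM mulrCA mulfV // mulr1.
Qed.

Lemma sum_frob2_sample_term_le :
  \sum_(i < n) p i * frob2 (sample_term i) <= frob2 A ^+ 2 / (beta * c%:R ^+ 2).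
Proof.
have -> : frob2 A ^+ 2 / (beta * c%:R ^+ 2) =
    \sum_(i < n) colnorm2 A i * (frob2 A / (beta * c%:R ^+ 2)).
  by rewrite -mulr_suml sum_colnorm2 mulrA expr2.
apply: ler_sum => i _; rewrite /sample_term frob2Z frob2_col_outer.
have [p0|p_neq0] := eqVneq (p i) 0.
  by rewrite p0 mul0r mulr_ge0 ?colnorm2_ge0 ?divr_ge0 ?mulr_ge0 ?sqr_ge0 ?ltW.
have p_gt0 : 0 < p i by rewrite lt_def p_neq0 p_ge0.
have -> : p i * ((c%:R * p i)^-1 ^+ 2 * colnorm2 A i ^+ 2) =
    colnorm2 A i * (colnorm2 A i / (p i * c%:R ^+ 2)).
  by field; rewrite p_neq0 gt_eqF.
rewrite ler_wpM2l ?colnorm2_ge0 // ler_pdivrMr ?mulr_gt0 ?exprn_gt0 //.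
have -> : frob2 A / (beta * c%:R ^+ 2) * (p i * c%:R ^+ 2) = p i * frob2 A / beta.
  by field; rewrite !gt_eqF.
exact: colnorm2_le.
Qed.

Lemma iid_expect_sample_err_sqr_le :
  iid_expect p c (fun S => sample_err S ^+ 2) <= frob2 A ^+ 2 / (beta * c%:R).
Proof.
set W := A *m A^T; pose X i := c%:R^-1 *: W - sample_term i.
have X_mean0 : \sum_(i < n) p i *: X i = 0.
  under eq_bigr do rewrite scalerBr.
  by rewrite sumrB sample_term_wmean -scaler_suml p_sum1 scale1r subrr.
have errE S : sample_err S ^+ 2 = frob2 (\sum_(t < c) X (S t)).
  rewrite /sample_err sqr_frob sumrB sumr_const card_ord scalerMnl -mulr_natr.
  by rewrite mulVf ?gt_eqF // scale1r.
rewrite (eq_iid_expect p errE) iid_expect_frob2_sum //.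
have -> : frob2 A ^+ 2 / (beta * c%:R) = c%:R * (frob2 A ^+ 2 / (beta * c%:R ^+ 2)).
  by field; rewrite !gt_eqF.
rewrite ler_wpM2l ?ler0n // (le_trans _ sum_frob2_sample_term_le) //.
by rewrite /X -sample_term_wmean sum_frob2_centered_le.
Qed.

Lemma iid_expect_sample_err_le :
  iid_expect p c sample_err <= Num.sqrt (frob2 A ^+ 2 / (beta * c%:R)).
Proof.
apply: (le_trans (ler_norm _)).
rewrite -sqrtr_sqr ler_sqrt ?divr_ge0 ?sqr_ge0 ?mulr_ge0 ?ler0n ?(ltW beta_gt0) //.
exact: (le_trans (iid_expect_sqr_le p_ge0 p_sum1 _) iid_expect_sample_err_sqr_le).
Qed.

Lemma iid_prob_sample_err_gt_le tau :
  Num.sqrt (frob2 A ^+ 2 / (beta * c%:R)) <= tau ->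
  iid_prob p (fun S => tau < sample_err S) <=
  expR (- ((tau - Num.sqrt (frob2 A ^+ 2 / (beta * c%:R))) ^+ 2 /
           (4 * c%:R * (2 * (frob2 A / (beta * c%:R))) ^+ 2))).
Proof.
move=> mu_le; apply: mcdiarmid_tail => //.
- by rewrite mulr_gt0 // divr_gt0 // mulr_gt0.
- by rewrite subr_ge0.
- exact: bounded_diff_sample_err.
- by have := iid_expect_sample_err_le; lra.
Qed.

End ColumnSampling.

(* With [l = ln (1 / delta)] and [q = sqrt (8 l / beta)], the sample size gives
   [tau >= sqrt 2 (1 + q) mu], hence [tau - mu >= sqrt 2 q mu], whose square is
   exactly [4 c d^2 l] for [d = 2 Phi / (beta c)]. *)
Lemma sample_size_tail_le (R : realType) (Phi beta eps delta : R) (k c : nat) :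
  0 < Phi -> 0 < beta -> 0 < eps -> 0 < delta -> delta < 1 -> (0 < k)%N -> (0 < c)%N ->
  4 * (1 + Num.sqrt (8 / beta * ln (1 / delta))) ^+ 2 * k%:R / (beta * eps ^+ 2) <= c%:R ->
  let mu := Num.sqrt (Phi ^+ 2 / (beta * c%:R)) in
  let tau := eps * Phi / Num.sqrt (2 * k%:R) in
  mu <= tau /\
  expR (- ((tau - mu) ^+ 2 / (4 * c%:R * (2 * (Phi / (beta * c%:R))) ^+ 2))) <= delta.
Proof.
move=> Phi_gt0 beta_gt0 eps_gt0 delta_gt0 delta_lt1 k_gt0 c_gt0 c_ge mu tau.
have cR_gt0 : 0 < c%:R :> R by rewrite ltr0n.
have kR_gt0 : 0 < k%:R :> R by rewrite ltr0n.
have bc_gt0 : 0 < beta * c%:R by rewrite mulr_gt0.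
set l := ln (1 / delta); set q := Num.sqrt (8 / beta * l).
have l_gt0 : 0 < l by rewrite ln_gt0 // ltr_pdivlMr // mul1r.
have q_gt0 : 0 < q by rewrite sqrtr_gt0 mulr_gt0 ?divr_gt0.
have q2 : q ^+ 2 = 8 / beta * l by rewrite sqr_sqrtr // ltW // mulr_gt0 ?divr_gt0.
have mu_gt0 : 0 < mu by rewrite sqrtr_gt0 divr_gt0 ?exprn_gt0 ?mulr_gt0.
have mu2 : mu ^+ 2 = Phi ^+ 2 / (beta * c%:R).
  by rewrite sqr_sqrtr // ltW // divr_gt0 ?exprn_gt0 ?mulr_gt0.
have sk2 : Num.sqrt (2 * k%:R) ^+ 2 = 2 * k%:R :> R by rewrite sqr_sqrtr ?mulr_ge0 ?ler0n.
set r2 := Num.sqrt (2 : R).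
have r2_ge1 : 1 <= r2 by rewrite -sqrtr1 ler_sqrt //; lra.
have r2_sq : r2 ^+ 2 = 2 by rewrite sqr_sqrtr //; lra.
have tau_ge : r2 * (1 + q) * mu <= tau.
  have tau_ge0 : 0 <= tau by rewrite /tau divr_ge0 ?sqrtr_ge0 // mulr_ge0 // ltW.
  have lhs_ge0 : 0 <= r2 * (1 + q) * mu by rewrite !mulr_ge0 //; lra.
  rewrite -(ler_pXn2r (_ : 0 < 2)%N) ?nnegrE //.
  have c_ge' : 4 * (1 + q) ^+ 2 * k%:R <= c%:R * (beta * eps ^+ 2).
    by rewrite -ler_pdivrMr // mulr_gt0 // exprn_gt0.
  rewrite /tau !exprMn exprVn sk2 r2_sq mu2 -subr_ge0.
  have -> : eps ^+ 2 * Phi ^+ 2 / (2 * k%:R) - 2 * (1 + q) ^+ 2 * (Phi ^+ 2 / (beta * c%:R)) =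
      (c%:R * (beta * eps ^+ 2) - 4 * (1 + q) ^+ 2 * k%:R) * (Phi ^+ 2 / (2 * k%:R * beta * c%:R)).
    by field; rewrite !gt_eqF.
  by rewrite mulr_ge0 ?subr_ge0 // divr_ge0 ?sqr_ge0 // !mulr_ge0 ?ltW.
have dev : r2 * q * mu <= tau - mu.
  have : r2 * (1 + q) * mu = r2 * mu + r2 * q * mu by ring.
  have : mu <= r2 * mu by rewrite ler_peMl // ltW.
  lra.
have dev_gt0 : 0 < r2 * q * mu by rewrite !mulr_gt0 //; lra.
split; first lra.
have -> : delta = expR (- l) by rewrite expRN lnK ?invf_div ?divr1 // posrE divr_gt0.
rewrite ler_expR lerN2 ler_pdivlMr ?mulr_gt0 ?exprn_gt0 ?divr_gt0 ?invr_gt0 //.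
have -> : l * (4 * c%:R * (2 * (Phi / (beta * c%:R))) ^+ 2) = (r2 * q * mu) ^+ 2.
  by rewrite !exprMn r2_sq q2 mu2; field; rewrite !gt_eqF.
by apply: lerXn2r; rewrite ?nnegrE; lra.
Qed.

Theorem mainTheorem13 (R : realType) (m n : nat) (A : 'M[R]_(m, n))
  (k c : nat) (eps beta delta : R) (p : 'I_n -> R) (Ak : 'M[R]_(m, n)) :
  (0 < k)%N -> 0 < eps ->
  (1 <= c <= n)%N ->
  0 < beta -> beta <= 1 ->
  (forall i, 0 <= p i) -> \sum_(i < n) p i = 1 ->
  (forall i, beta * colnorm2 A i / frob2 A <= p i) ->
  0 < delta -> delta < 1 ->
  best_rank_approx k A Ak ->
  let eta := 1 + Num.sqrt ((8 / beta) * ln (1 / delta)) in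
  4 * eta ^+ 2 * k%:R / (beta * eps ^+ 2) <= c%:R ->
  1 - delta <=
    iid_prob p (fun S : {ffun 'I_c -> 'I_n} =>
      let C := sampled_cols A S in
      frob2 (A - C *m mpinv C *m A) <= frob2 (A - Ak) + eps * frob2 A).
Proof.
move=> k_gt0 eps_gt0 /andP[c_gt0 _] beta_gt0 _ p_ge0 p_sum1 p_ge delta_gt0 delta_lt1.
move=> [rkAk _] eta c_ge.
have [A0|A_gt0] : A = 0 \/ 0 < frob2 A.
  by case: (eqVneq A 0) => [|A_neq0]; [left | right; rewrite lt_def frob2_eq0 A_neq0 frob2_ge0].
  apply: (@le_trans _ _ (iid_prob p (fun _ : {ffun 'I_c -> 'I_n} => true))).
    by rewrite iid_probT // lerBlDr lerDl ltW.
  by apply: (iid_prob_le p_ge0) => S _ /=; rewrite A0 mulmx0 subr0 frob20 mulr0 addr0 frob2_ge0.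
set tau := eps * frob2 A / Num.sqrt (2 * k%:R).
have [mu_le tail_le] :=
  sample_size_tail_le A_gt0 beta_gt0 eps_gt0 delta_gt0 delta_lt1 k_gt0 c_gt0 c_ge.
apply: (@le_trans _ _ (iid_prob p (fun S => ~~ (tau < sample_err A p S)))).
  rewrite iid_probC // lerD2l lerN2 (le_trans _ tail_le) //.
  exact: iid_prob_sample_err_gt_le.
apply: (iid_prob_le p_ge0) => S; rewrite -leNgt => errS /=.
rewrite (le_trans (frob2_sub_mpinv_sampled_le A p_ge0 S rkAk)) // lerD2l.
have sk_gt0 : 0 < Num.sqrt (2 * k%:R : R) by rewrite sqrtr_gt0 mulr_gt0 ?ltr0n.
have -> : eps * frob2 A = Num.sqrt (2 * k%:R) * tau by rewrite [RHS]mulrC /tau divfK ?gt_eqF.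
by rewrite ler_wpM2l ?sqrtr_ge0.
Qed.
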